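(* Let $G$ be a finite simple graph without isolated vertices with $\gamma_t(G)=2$. Then $TDV(v)\le \deg(v)$ for every $v\in V(G)$.
   Context: A set $D \subseteq V(G)$ is a total dominating set of $G$ if every vertex of $G$ has a neighbor in $D$. $\gamma_t(G)$ is the minimum cardinality of a total dominating set; a minimum one is a $\gamma_t(G)$-set. $TDV(v)$ is the number of $\gamma_t(G)$-sets containing $v$. *)

From mathcomp Require Import all_boot.
Set Implicit Arguments. Unset Strict Implicit. Unset Printing Implicit Defensive.

Definition simple_graph (T : finType) (e : rel T) : Prop :=
  symmetric e /\ irreflexive e.

Definition nbhd (T : finType) (e : rel T) (v : T) : {set T} := [set u | e v u].
Definition deg (T : finType) (e : rel T) (v : T) : nat := #|nbhd e v|.

Definition no_isolated (T : finType) (e : rel T) : Prop :=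
  forall v : T, 0 < deg e v.

Definition is_tds (T : finType) (e : rel T) (D : {set T}) : bool :=
  [forall v, [exists u in D, e v u]].

(* total domination number: minimum cardinality of a TDS
   (the default value #|T| is irrelevant when a TDS exists) *)
Definition gamma_t (T : finType) (e : rel T) : nat :=
  \big[minn/#|T|]_(D : {set T} | is_tds e D) #|D|.

Definition is_gamma_t_set (T : finType) (e : rel T) (D : {set T}) : bool :=
  is_tds e D && (#|D| == gamma_t e).

Definition TDV (T : finType) (e : rel T) (v : T) : nat :=
  #|[set D : {set T} | is_gamma_t_set e D & v \in D]|.

From mathcomp Require Import all_boot.

(* A gamma_t-set D of size 2 containing v must also contain a vertex u
   dominating v; as e is irreflexive, u <> v, so D = {v, u} with u a neighbour
   of v: the gamma_t-sets containing v lie in the image of N(v) under u |-> {v, u}. *)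

Lemma tds_has_neighbour {T : finType} {e : rel T} {D : {set T}} (v : T) :
  is_tds e D -> exists2 u, u \in D & e v u.
Proof. by move=> /forallP /(_ v) /existsP [u /andP[uD evu]]; exists u. Qed.

Lemma set2_card_eq (T : finType) (D : {set T}) (x y : T) :
  x \in D -> y \in D -> x != y -> #|D| = 2 -> D = [set x; y].
Proof.
move=> xD yD xy cardD; apply/esym/eqP.
by rewrite eqEcard subUset !sub1set xD yD cards2 xy cardD.
Qed.

Lemma gamma_t_set_nbhd (T : finType) (e : rel T) (D : {set T}) (v : T) :
  irreflexive e -> gamma_t e = 2 -> is_gamma_t_set e D -> v \in D ->
  D \in [set [set v; u] | u in nbhd e v].
Proof.
move=> irr_e gamma2 /andP[tdsD /eqP cardD] vD.
have [u uD evu] := tds_has_neighbour v tdsD.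
have vu : v != u by apply: contraTneq evu => <-; rewrite irr_e.
apply/imsetP; exists u; first by rewrite inE.
by apply: set2_card_eq; rewrite ?cardD.
Qed.

Theorem lemma2p12 (T : finType) (e : rel T) :
  simple_graph e -> no_isolated e -> gamma_t e = 2 ->
  forall v : T, TDV e v <= deg e v.
Proof.
move=> [_ irr_e] _ gamma2 v.
apply: leq_trans (leq_imset_card (fun u => [set v; u]) (nbhd e v)).
apply: subset_leq_card; apply/subsetP => D; rewrite inE => /andP[gD vD].
exact: gamma_t_set_nbhd.
Qed.
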